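(* Let $a\neq0$ and let $\varepsilon$ satisfy $0<\varepsilon<\sqrt{2}$, $\varepsilon|a|<1$, $\varepsilon^{2}+4a^{2}>4$. Let $$\omega_{1,2}=\frac{1}{\sqrt{2}}\Big(2-\varepsilon^{2}\pm\varepsilon\sqrt{\varepsilon^{2}-4+4a^{2}}\Big)^{1/2},\qquad \omega_1>\omega_2>0,$$ and suppose that there is $\tau>0$ such that both $\pm i\omega_1$ and $\pm i\omega_2$ are roots of $\lambda^{2}-\varepsilon\lambda-\varepsilon a e^{-\lambda\tau}+1=0$ for this same $\tau$. Then $k\omega_1\neq l\omega_2$ for all integers $k,l$ with $1\le |k|+|l|\le 4$.
   Context: Equivalently, $\pm i\omega$ is a root of the characteristic equation for given $(\varepsilon,\tau)$ iff $\omega=a\sin(\omega\tau)$ and $1-\omega^{2}=\varepsilon a\cos(\omega\tau)$. This equation is the characteristic equation at $x=0$ of the delayed van der Pol oscillator $\ddot{x}+\varepsilon(x^{2}-1)\dot{x}+x=\varepsilon f(x(t-\tau))$ with $f(0)=f''(0)=0$, $f'(0)=a$. *)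

From Stdlib Require Import Reals ZArith.
From Coquelicot Require Import Coquelicot.
Open Scope R_scope.

Definition cexp (z : C) : C :=
  (exp (Re z) * cos (Im z), exp (Re z) * sin (Im z)).

Definition char_root (eps a tau : R) (lam : C) : Prop :=
  (lam * lam - RtoC eps * lam
     - RtoC eps * RtoC a * cexp (- (lam * RtoC tau)) + 1)%C = 0%C.

Definition omega1 (eps a : R) : R :=
  / sqrt 2 * sqrt (2 - eps ^ 2 + eps * sqrt (eps ^ 2 - 4 + 4 * a ^ 2)).
Definition omega2 (eps a : R) : R :=
  / sqrt 2 * sqrt (2 - eps ^ 2 - eps * sqrt (eps ^ 2 - 4 + 4 * a ^ 2)).

Definition iw (w : R) : C := (0, w).

(* At
   [lam = i w] they read [w = a sin (w tau)].  Since [0 < omega2 < omega1], a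
   relation [k omega1 = l omega2] with [|k| + |l| <= 4] forces
   [omega1 = n omega2] with [n = 2] or [n = 3].  Writing [x = omega2 tau], this
   gives [sin (n x) = n sin x] with [sin x <> 0], which is impossible because
   [|sin (n x)| < n |sin x|] whenever [n >= 2] and [sin x <> 0]. *)

From Stdlib Require Import Reals ZArith Lra Lia Psatz.
From Coquelicot Require Import Coquelicot.
Open Scope R_scope.

Lemma char_root_iw (eps a tau w : R) :
  eps <> 0 -> char_root eps a tau (iw w) ->
  w = a * sin (w * tau) /\ 1 - w ^ 2 = eps * a * cos (w * tau).
Proof.
  unfold char_root, cexp, iw; intros Heps H.
  pose proof (f_equal fst H) as Hre; pose proof (f_equal snd H) as Him; clear H.
  unfold Cminus, Cplus, Cmult, Copp, RtoC in Hre, Him; simpl in Hre, Him.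
  replace (- (0 * tau - w * 0)) with 0 in * by ring.
  replace (- (0 * 0 + w * tau)) with (- (w * tau)) in * by ring.
  rewrite exp_0, cos_neg, sin_neg in *.
  split.
  - apply (Rmult_eq_reg_l eps); [lra | assumption].
  - lra.
Qed.

Lemma Rabs_sin_plus_le (x y : R) :
  Rabs (sin (x + y)) <= Rabs (sin x) * Rabs (cos y) + Rabs (sin y).
Proof.
  rewrite sin_plus.
  eapply Rle_trans; [apply Rabs_triang |].
  rewrite !Rabs_mult.
  apply Rplus_le_compat_l.
  rewrite <- (Rmult_1_l (Rabs (sin y))) at 2.
  apply Rmult_le_compat_r; [apply Rabs_pos | apply Rabs_le, COS_bound].
Qed.

Lemma Rabs_sin_INR_mult_le (n : nat) (x : R) :
  Rabs (sin (INR n * x)) <= INR n * Rabs (sin x).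
Proof.
  induction n as [| n IH].
  - simpl; rewrite Rmult_0_l, sin_0, Rabs_R0; lra.
  - rewrite S_INR, Rmult_plus_distr_r, Rmult_1_l.
    eapply Rle_trans; [apply Rabs_sin_plus_le |].
    assert (Hcos : Rabs (cos x) <= 1) by apply Rabs_le, COS_bound.
    assert (Rabs (sin (INR n * x)) * Rabs (cos x) <= INR n * Rabs (sin x) * 1).
    { apply Rmult_le_compat; [apply Rabs_pos | apply Rabs_pos | exact IH | exact Hcos]. }
    lra.
Qed.

Lemma Rabs_sin_INR_mult_lt (n : nat) (x : R) :
  (2 <= n)%nat -> sin x <> 0 -> Rabs (sin (INR n * x)) < INR n * Rabs (sin x).
Proof.
  intros Hn Hsin.
  destruct n as [| m]; [lia |].
  rewrite S_INR, Rmult_plus_distr_r, Rmult_1_l.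
  eapply Rle_lt_trans; [apply Rabs_sin_plus_le |].
  assert (Hcos : Rabs (cos x) < 1).
  { pose proof (sin2_cos2 x) as Hpyth; unfold Rsqr in Hpyth.
    assert (0 < sin x * sin x) by (apply Rsqr_pos_lt; exact Hsin).
    apply Rabs_def1; nra. }
  assert (Hm : 1 <= INR m) by (apply (le_INR 1); lia).
  assert (0 < Rabs (sin x)) by (apply Rabs_pos_lt; exact Hsin).
  assert (Rabs (sin (INR m * x)) * Rabs (cos x) <= INR m * Rabs (sin x) * Rabs (cos x)).
  { apply Rmult_le_compat_r; [apply Rabs_pos | apply Rabs_sin_INR_mult_le]. }
  assert (INR m * Rabs (sin x) * Rabs (cos x) < INR m * Rabs (sin x) * 1).
  { apply Rmult_lt_compat_l; [nra | exact Hcos]. }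
  lra.
Qed.

Lemma sin_condition_no_harmonic (n : nat) (a tau w : R) :
  (2 <= n)%nat -> w <> 0 ->
  w = a * sin (w * tau) -> INR n * w = a * sin (INR n * w * tau) -> False.
Proof.
  intros Hn Hw Hbase Hharm.
  assert (Hsin : sin (w * tau) <> 0) by (intro H0; rewrite H0, Rmult_0_r in Hbase; lra).
  rewrite Rmult_assoc in Hharm.
  pose proof (Rabs_sin_INR_mult_lt n (w * tau) Hn Hsin) as Hlt.
  apply (f_equal Rabs) in Hbase, Hharm; rewrite Rabs_mult in Hbase; rewrite !Rabs_mult in Hharm.
  assert (Ha : 0 < Rabs a).
  { apply Rabs_pos_lt; intro Ha0; subst a; rewrite Rabs_R0 in Hbase.
    apply Hw, Rabs_eq_0; lra. }
  rewrite Rabs_pos_eq in Hharm by apply pos_INR.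
  apply (Rmult_lt_compat_l (Rabs a)) in Hlt; [| exact Ha].
  replace (Rabs a * (INR n * Rabs (sin (w * tau))))
    with (INR n * (Rabs a * Rabs (sin (w * tau)))) in Hlt by ring.
  rewrite <- Hbase, <- Hharm in Hlt.
  lra.
Qed.

Lemma small_integer_ratio (k l : Z) (w1 w2 : R) :
  0 < w2 < w1 -> (1 <= Z.abs k + Z.abs l <= 4)%Z -> IZR k * w1 = IZR l * w2 ->
  exists n : nat, (2 <= n)%nat /\ w1 = INR n * w2.
Proof.
  intros Hw Hkl E.
  assert (Hk : (k = -4 \/ k = -3 \/ k = -2 \/ k = -1 \/ k = 0 \/
                k = 1 \/ k = 2 \/ k = 3 \/ k = 4)%Z) by lia.
  assert (Hl : (l = -4 \/ l = -3 \/ l = -2 \/ l = -1 \/ l = 0 \/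
                l = 1 \/ l = 2 \/ l = 3 \/ l = 4)%Z) by lia.
  destruct Hk as [->|[->|[->|[->|[->|[->|[->|[->| -> ]]]]]]]];
  destruct Hl as [->|[->|[->|[->|[->|[->|[->|[->| -> ]]]]]]]];
  simpl in Hkl; try lia; simpl IZR in E;
  first [ exfalso; lra
        | exists 2%nat; simpl; split; [lia | lra]
        | exists 3%nat; simpl; split; [lia | lra] ].
Qed.

Lemma omega2_pos_lt_omega1 (eps a : R) :
  0 < eps -> eps < sqrt 2 -> eps * Rabs a < 1 -> eps ^ 2 + 4 * a ^ 2 > 4 ->
  0 < omega2 eps a < omega1 eps a.
Proof.
  intros He Hes Hea Hd; unfold omega1, omega2.
  set (D := eps ^ 2 - 4 + 4 * a ^ 2).
  assert (HD : 0 < D) by (unfold D; lra).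
  set (S := sqrt D).
  assert (HS : S * S = D) by (apply sqrt_sqrt; lra).
  assert (HepsS : 0 < eps * S) by (apply Rmult_lt_0_compat; [lra | apply sqrt_lt_R0; lra]).
  assert (He2 : eps ^ 2 < 2) by (pose proof (sqrt_sqrt 2 ltac:(lra)); nra).
  assert (Hea2 : (eps * a) ^ 2 < 1).
  { rewrite <- Rsqr_pow2, Rsqr_abs, Rsqr_pow2, Rabs_mult, (Rabs_pos_eq eps) by lra.
    assert (0 <= eps * Rabs a) by (apply Rmult_le_pos; [lra | apply Rabs_pos]); nra. }
  (* [(2 - eps^2)^2 - eps^2 D = 4 (1 - (eps a)^2)], so the smaller radicand is positive. *)
  assert (Hrad : 0 < 2 - eps ^ 2 - eps * S).
  { assert ((2 - eps ^ 2) ^ 2 - (eps * S) ^ 2 = 4 * (1 - (eps * a) ^ 2)).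
    { replace ((eps * S) ^ 2) with (eps ^ 2 * (S * S)) by ring; rewrite HS; unfold D; ring. }
    nra. }
  assert (0 < / sqrt 2) by (apply Rinv_0_lt_compat, sqrt_lt_R0; lra).
  split.
  - apply Rmult_lt_0_compat; [assumption | apply sqrt_lt_R0; exact Hrad].
  - apply Rmult_lt_compat_l; [assumption | apply sqrt_lt_1; lra].
Qed.

Theorem lemma2 (a eps : R) :
  a <> 0 ->
  0 < eps -> eps < sqrt 2 -> eps * Rabs a < 1 ->
  eps ^ 2 + 4 * a ^ 2 > 4 ->
  (exists tau : R, 0 < tau /\
     char_root eps a tau (iw (omega1 eps a)) /\
     char_root eps a tau (iw (- omega1 eps a)) /\
     char_root eps a tau (iw (omega2 eps a)) /\
     char_root eps a tau (iw (- omega2 eps a))) ->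
  forall k l : Z, (1 <= Z.abs k + Z.abs l <= 4)%Z ->
    IZR k * omega1 eps a <> IZR l * omega2 eps a.
Proof.
  (* [a <> 0] is implied by [eps ^ 2 < 2] and [eps ^ 2 + 4 a ^ 2 > 4]. *)
  intros _ He Hes Hea Hd [tau [_ [Hroot1 [_ [Hroot2 _]]]]] k l Hkl E.
  destruct (char_root_iw eps a tau _ ltac:(lra) Hroot1) as [Hsin1 _].
  destruct (char_root_iw eps a tau _ ltac:(lra) Hroot2) as [Hsin2 _].
  pose proof (omega2_pos_lt_omega1 eps a He Hes Hea Hd) as Hw.
  destruct (small_integer_ratio k l _ _ Hw Hkl E) as [n [Hn Hratio]].
  rewrite Hratio in Hsin1.
  apply (sin_condition_no_harmonic n a tau (omega2 eps a)); lra || assumption.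
Qed.
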